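(* Let $u,v,p,q,r>1$ satisfy $\frac1u+\frac1v=1$ and $\frac1{u(p-1)}+\frac1{v(q-1)}=\frac1{r-1}$, let $p',q',r'$ be the conjugate exponents of $p,q,r$, and put $\alpha=\frac{q'}{v\sqrt{p'q'r'}}$, $\beta=\frac{r'}{\sqrt{p'q'r'}}$, $\gamma=\frac{p'}{u\sqrt{p'q'r'}}$. Then for all $s,t>0$, $$\frac{p^{1/p}q^{1/q}}{r^{1/r}}\cdot\frac{s^{1/p}t^{1/q}}{(s+t+\beta^2)^{1/r'}(\gamma^2s+\alpha^2t+st)^{1/r}}\le v^{\frac1r-\frac1p}u^{\frac1r-\frac1q},$$ with equality if and only if $s=\frac1{pv}$ and $t=\frac1{qu}$. In particular the supremum over $s,t>0$ of the left-hand side equals $v^{\frac1r-\frac1p}u^{\frac1r-\frac1q}$. *)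

From Stdlib Require Import Reals.
Open Scope R_scope.

Definition conj_exp (p : R) : R := p / (p - 1).

Definition lhs10 (u v p q r s t : R) : R :=
  let p' := conj_exp p in let q' := conj_exp q in let r' := conj_exp r in
  let D := sqrt (p' * q' * r') in
  let alpha := q' / (v * D) in
  let beta := r' / D in
  let gamma := p' / (u * D) in
  (Rpower p (1/p) * Rpower q (1/q) / Rpower r (1/r)) *
  (Rpower s (1/p) * Rpower t (1/q) /
   (Rpower (s + t + beta^2) (1/r') *
    Rpower (gamma^2 * s + alpha^2 * t + s * t) (1/r))).

Definition rhs10 (u v p q r : R) : R :=
  Rpower v (1/r - 1/p) * Rpower u (1/r - 1/q).

From Stdlib Require Import Reals Lra.
Open Scope R_scope.

(* Put x = p v s and y = q u t.  Both bases in the denominator are weighted arithmetic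
   means: s + t + β² = x/(pv) + y/(qu) + β²·1 and r u v (γ² s + α² t + s t)
   = μ1 x + μ2 y + μ3 x y, each family of weights summing to 1 by the hypotheses on
   u, v, p, q, r.  Weighted AM-GM bounds each mean below by a geometric mean; raised to
   the powers 1/r' and 1/r, the exponents of x and y add up to exactly 1/p and 1/q, so
   the denominator dominates a constant multiple of s^(1/p) t^(1/q), and that constant
   yields the right-hand side.  Equality in AM-GM forces x = y = 1. *)

Lemma ln_div (x y : R) : 0 < x -> 0 < y -> ln (x / y) = ln x - ln y.
Proof.
  intros hx hy; unfold Rdiv.
  rewrite ln_mult, ln_Rinv; [ring | lra | lra | apply Rinv_0_lt_compat; lra].
Qed.

Lemma ln_le_tangent (M z : R) : 0 < M -> 0 < z ->
  ln z <= ln M + (z / M - 1) /\ (ln z = ln M + (z / M - 1) -> z = M).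
Proof.
  intros hM hz.
  assert (hzM : 0 < z / M) by (apply Rdiv_lt_0_compat; lra).
  assert (Hexp : exp (ln (z / M)) = z / M) by (apply exp_ln; lra).
  rewrite ln_div in Hexp by lra.
  split.
  - pose proof (exp_ineq1_le (ln z - ln M)); lra.
  - intros he.
    destruct (Req_dec (ln z - ln M) 0) as [h0 | h0].
    + apply ln_inv; lra.
    + pose proof (exp_ineq1 _ h0); lra.
Qed.

Lemma weighted_ln_le_ln_mean3 (w1 w2 w3 z1 z2 z3 : R) :
  0 < w1 -> 0 < w2 -> 0 < w3 -> w1 + w2 + w3 = 1 ->
  0 < z1 -> 0 < z2 -> 0 < z3 ->
  w1 * ln z1 + w2 * ln z2 + w3 * ln z3 <= ln (w1 * z1 + w2 * z2 + w3 * z3) /\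
  (w1 * ln z1 + w2 * ln z2 + w3 * ln z3 = ln (w1 * z1 + w2 * z2 + w3 * z3) ->
   z1 = z3 /\ z2 = z3).
Proof.
  intros hw1 hw2 hw3 hw hz1 hz2 hz3.
  set (M := w1 * z1 + w2 * z2 + w3 * z3).
  assert (hM : 0 < M).
  { assert (0 < w1 * z1) by (apply Rmult_lt_0_compat; lra).
    assert (0 < w2 * z2) by (apply Rmult_lt_0_compat; lra).
    assert (0 < w3 * z3) by (apply Rmult_lt_0_compat; lra).
    unfold M; lra. }
  (* Tangent-line bounds at M: the weighted errors sum to zero. *)
  destruct (ln_le_tangent M z1 hM hz1) as [t1 e1].
  destruct (ln_le_tangent M z2 hM hz2) as [t2 e2].
  destruct (ln_le_tangent M z3 hM hz3) as [t3 e3].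
  assert (hsum : w1 * (z1 / M - 1) + w2 * (z2 / M - 1) + w3 * (z3 / M - 1) = 0).
  { assert (hM0 : M <> 0) by lra.
    transitivity (M / M - (w1 + w2 + w3)); [unfold M; field; exact hM0 |].
    rewrite hw; field; exact hM0. }
  assert (d1 := Rmult_le_compat_l w1 _ _ (Rlt_le _ _ hw1) t1).
  assert (d2 := Rmult_le_compat_l w2 _ _ (Rlt_le _ _ hw2) t2).
  assert (d3 := Rmult_le_compat_l w3 _ _ (Rlt_le _ _ hw3) t3).
  assert (hlnM : w1 * ln M + w2 * ln M + w3 * ln M = ln M)
    by (transitivity ((w1 + w2 + w3) * ln M); [ring | rewrite hw; ring]).
  split; [lra |].
  intros heq.
  assert (z1 = M) by (apply e1, (Rmult_eq_reg_l w1); lra).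
  assert (z2 = M) by (apply e2, (Rmult_eq_reg_l w2); lra).
  assert (z3 = M) by (apply e3, (Rmult_eq_reg_l w3); lra).
  split; congruence.
Qed.

Definition mean_gap (c1 c2 c3 m1 m2 m3 th rh x y : R) : R :=
  th * ln (c1 * x + c2 * y + c3) + rh * ln (m1 * x + m2 * y + m3 * (x * y))
  - ((th * c1 + rh * (m1 + m3)) * ln x + (th * c2 + rh * (m2 + m3)) * ln y).

Lemma mean_gap_min (c1 c2 c3 m1 m2 m3 th rh x y : R) :
  0 < c1 -> 0 < c2 -> 0 < c3 -> c1 + c2 + c3 = 1 ->
  0 < m1 -> 0 < m2 -> 0 < m3 -> m1 + m2 + m3 = 1 ->
  0 < th -> 0 <= rh -> 0 < x -> 0 < y ->
  0 <= mean_gap c1 c2 c3 m1 m2 m3 th rh x y /\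
  (mean_gap c1 c2 c3 m1 m2 m3 th rh x y = 0 <-> x = 1 /\ y = 1).
Proof.
  intros hc1 hc2 hc3 hc hm1 hm2 hm3 hm hth hrh hx hy.
  destruct (weighted_ln_le_ln_mean3 c1 c2 c3 x y 1 hc1 hc2 hc3 hc hx hy Rlt_0_1)
    as [le1 eq1].
  destruct (weighted_ln_le_ln_mean3 m1 m2 m3 x y (x * y) hm1 hm2 hm3 hm hx hy
              (Rmult_lt_0_compat _ _ hx hy)) as [le2 eq2].
  rewrite ln_1, Rmult_0_r, Rmult_1_r in le1, eq1.
  rewrite ln_mult in le2, eq2 by lra.
  set (g1 := ln (c1 * x + c2 * y + c3) - (c1 * ln x + c2 * ln y)) in *.
  set (g2 := ln (m1 * x + m2 * y + m3 * (x * y)) - (m1 * ln x + m2 * ln y + m3 * (ln x + ln y))).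
  assert (hgap : mean_gap c1 c2 c3 m1 m2 m3 th rh x y = th * g1 + rh * g2)
    by (unfold mean_gap, g1, g2; ring).
  assert (hg1 : 0 <= th * g1) by (apply Rmult_le_pos; unfold g1; lra).
  assert (hg2 : 0 <= rh * g2) by (apply Rmult_le_pos; unfold g2; lra).
  rewrite hgap; split; [lra | split].
  - intros h0.
    assert (hg10 : g1 = 0) by (apply (Rmult_eq_reg_l th); lra).
    apply eq1; unfold g1 in hg10; lra.
  - intros [-> ->].
    unfold g1, g2.
    replace (c1 * 1 + c2 * 1 + c3) with 1 by lra.
    replace (m1 * 1 + m2 * 1 + m3 * (1 * 1)) with 1 by lra.
    rewrite ln_1; ring.
Qed.

Lemma le_of_ln_eq_sub (x y d : R) : 0 < x -> 0 < y -> ln x = ln y - d -> 0 <= d ->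
  x <= y /\ (x = y <-> d = 0).
Proof.
  intros hx hy hln [hd | hd].
  - assert (hlt : x < y) by (apply ln_lt_inv; lra).
    split; [lra | split; intros; lra].
  - assert (x = y) by (apply ln_inv; lra).
    split; [lra | split; intros; lra].
Qed.

Lemma pow2_div_sqrt (x y : R) : 0 <= y -> (x / sqrt y) ^ 2 = x ^ 2 / y.
Proof. intros hy; unfold Rdiv; rewrite Rpow_mult_distr, pow_inv, pow2_sqrt; auto. Qed.

Lemma conj_exp_gt0 (p : R) : 1 < p -> 0 < conj_exp p.
Proof. intros hp; apply Rdiv_lt_0_compat; lra. Qed.

Lemma conj_exp_eq (u v : R) : 1 < u -> v <> 0 -> 1 / u + 1 / v = 1 -> v = conj_exp u.
Proof.
  intros hu hv huv.
  assert (Hv : 1 / v = (u - 1) / u)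
    by (apply (Rplus_eq_reg_l (1 / u)); rewrite huv; field; lra).
  unfold conj_exp; replace v with (1 / (1 / v)) by (field; lra).
  rewrite Hv; field; lra.
Qed.

Lemma lhs10_gt0 (u v p q r s t : R) : 0 < lhs10 u v p q r s t.
Proof.
  unfold lhs10, Rpower; cbv zeta.
  repeat (apply Rdiv_lt_0_compat || apply Rmult_lt_0_compat); apply exp_pos.
Qed.

Lemma rhs10_gt0 (u v p q r : R) : 0 < rhs10 u v p q r.
Proof. apply Rmult_lt_0_compat; apply exp_pos. Qed.

Section Weights.
Variables u v p q r : R.
Hypotheses (hu : 1 < u) (hv : 1 < v) (hp : 1 < p) (hq : 1 < q) (hr : 1 < r)
  (huv : 1/u + 1/v = 1) (hpqr : 1/(u*(p-1)) + 1/(v*(q-1)) = 1/(r-1)).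

Let p' := conj_exp p.
Let q' := conj_exp q.
Let r' := conj_exp r.
(* With x = p v s and y = q u t: [c1 x + c2 y + c3 = s + t + β²] and
   [m1 x + m2 y + m3 x y = r u v (γ² s + α² t + s t)]. *)
Let c1 := 1 / (p * v).
Let c2 := 1 / (q * u).
Let c3 := r' / (p' * q').
Let gamma2 := p' / (u ^ 2 * q' * r').
Let alpha2 := q' / (v ^ 2 * p' * r').
Let m1 := gamma2 * c1 * (r * u * v).
Let m2 := alpha2 * c2 * (r * u * v).
Let m3 := c1 * c2 * (r * u * v).

Lemma weight_identities :
  c1 + c2 + c3 = 1 /\ m1 + m2 + m3 = 1 /\
  1 / r' * c1 + 1 / r * (m1 + m3) = 1 / p /\
  1 / r' * c2 + 1 / r * (m2 + m3) = 1 / q.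
Proof.
  assert (Hr : r = 1 + 1 / (1 / (u * (p - 1)) + 1 / (v * (q - 1))))
    by (rewrite hpqr; field; lra).
  unfold m1, m2, m3, gamma2, alpha2, c1, c2, c3, p', q', r', conj_exp.
  rewrite Hr, (conj_exp_eq u v) by lra; unfold conj_exp.
  assert (0 < (u - 1) * (p - 1)) by (apply Rmult_lt_0_compat; lra).
  assert (0 < (p - 1) * ((q - 1) * u)) by (repeat apply Rmult_lt_0_compat; lra).
  repeat split; field; repeat split; apply Rgt_not_eq; lra.
Qed.

Lemma weights_pos :
  0 < c1 /\ 0 < c2 /\ 0 < c3 /\ 0 < m1 /\ 0 < m2 /\ 0 < m3.
Proof.
  assert (0 < p') by apply (conj_exp_gt0 p hp).
  assert (0 < q') by apply (conj_exp_gt0 q hq).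
  assert (0 < r') by apply (conj_exp_gt0 r hr).
  unfold m1, m2, m3, gamma2, alpha2, c1, c2, c3.
  repeat split; repeat (assumption || apply Rdiv_lt_0_compat || apply Rmult_lt_0_compat
                        || apply pow_lt); lra.
Qed.

Lemma ln_lhs10 (s t : R) : 0 < s -> 0 < t ->
  ln (lhs10 u v p q r s t) =
  ln (rhs10 u v p q r) - mean_gap c1 c2 c3 m1 m2 m3 (1 / r') (1 / r) (p * v * s) (q * u * t).
Proof.
  intros hs ht.
  destruct weight_identities as [_ [_ [ex ey]]].
  assert (0 < p') by apply (conj_exp_gt0 p hp).
  assert (0 < q') by apply (conj_exp_gt0 q hq).
  assert (0 < r') by apply (conj_exp_gt0 r hr).
  assert (hD : forall z, (z / sqrt (p' * q' * r')) ^ 2 = z ^ 2 / (p' * q' * r')).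
  { intros z; apply pow2_div_sqrt.
    apply Rlt_le, Rmult_lt_0_compat; [apply Rmult_lt_0_compat |]; assumption. }
  assert (hA : s + t + (r' / sqrt (p' * q' * r')) ^ 2 = c1 * (p * v * s) + c2 * (q * u * t) + c3).
  { rewrite hD; unfold c1, c2, c3; field; repeat split; lra. }
  assert (hB : (p' / (u * sqrt (p' * q' * r'))) ^ 2 * s + (q' / (v * sqrt (p' * q' * r'))) ^ 2 * t
               + s * t
               = (m1 * (p * v * s) + m2 * (q * u * t) + m3 * ((p * v * s) * (q * u * t)))
                 / (r * u * v)).
  { rewrite !Rdiv_mult_distr, !hD; unfold m1, m2, m3, gamma2, alpha2, c1, c2.
    field; repeat split; lra. }
  unfold lhs10; cbv zeta; fold p' q' r'.
  rewrite hA, hB.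
  unfold mean_gap; rewrite ex, ey.
  destruct weights_pos as (hc1 & hc2 & hc3 & hm1 & hm2 & hm3).
  assert (hx : 0 < p * v * s) by (repeat apply Rmult_lt_0_compat; lra).
  assert (hy : 0 < q * u * t) by (repeat apply Rmult_lt_0_compat; lra).
  set (x := p * v * s) in *; set (y := q * u * t) in *.
  set (A := c1 * x + c2 * y + c3).
  set (Bn := m1 * x + m2 * y + m3 * (x * y)).
  assert (hA0 : 0 < A).
  { assert (0 < c1 * x) by (apply Rmult_lt_0_compat; lra).
    assert (0 < c2 * y) by (apply Rmult_lt_0_compat; lra). unfold A; lra. }
  assert (hB0 : 0 < Bn).
  { assert (0 < m1 * x) by (apply Rmult_lt_0_compat; lra).
    assert (0 < m2 * y) by (apply Rmult_lt_0_compat; lra).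
    assert (0 < m3 * (x * y))
      by (apply Rmult_lt_0_compat; [| apply Rmult_lt_0_compat]; lra).
    unfold Bn; lra. }
  assert (hpow : forall a b, 0 < Rpower a b) by (intros; apply exp_pos).
  unfold rhs10.
  rewrite ln_mult, !ln_div, !ln_mult, !ln_Rpower, ln_div, !ln_mult
    by (repeat (apply hpow || apply Rdiv_lt_0_compat || apply Rmult_lt_0_compat); lra).
  unfold x, y; rewrite !ln_mult by (try apply Rmult_lt_0_compat; lra).
  ring.
Qed.

Lemma lhs10_le_rhs10 (s t : R) : 0 < s -> 0 < t ->
  lhs10 u v p q r s t <= rhs10 u v p q r /\
  (lhs10 u v p q r s t = rhs10 u v p q r <-> s = 1 / (p * v) /\ t = 1 / (q * u)).
Proof.
  intros hs ht.
  destruct weight_identities as (hc & hm & _ & _).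
  destruct weights_pos as (hc1 & hc2 & hc3 & hm1 & hm2 & hm3).
  assert (hr' : 0 < 1 / r') by (apply Rdiv_lt_0_compat; [lra | apply conj_exp_gt0; lra]).
  assert (hr1 : 0 <= 1 / r) by (apply Rlt_le, Rdiv_lt_0_compat; lra).
  assert (hx : 0 < p * v * s) by (repeat apply Rmult_lt_0_compat; lra).
  assert (hy : 0 < q * u * t) by (repeat apply Rmult_lt_0_compat; lra).
  destruct (mean_gap_min c1 c2 c3 m1 m2 m3 (1 / r') (1 / r) (p * v * s) (q * u * t)
              hc1 hc2 hc3 hc hm1 hm2 hm3 hm hr' hr1 hx hy) as [hgap hgap0].
  destruct (le_of_ln_eq_sub _ _ _ (lhs10_gt0 u v p q r s t) (rhs10_gt0 u v p q r)
              (ln_lhs10 s t hs ht) hgap) as [hle heq].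
  split; [exact hle |].
  rewrite heq, hgap0.
  split; intros [e1 e2]; split.
  - apply (Rmult_eq_reg_l (p * v)); [rewrite e1; field | apply Rgt_not_eq]; nra.
  - apply (Rmult_eq_reg_l (q * u)); [rewrite e2; field | apply Rgt_not_eq]; nra.
  - rewrite e1; field; lra.
  - rewrite e2; field; lra.
Qed.

End Weights.

Theorem mainTheorem10 (u v p q r : R) :
  1 < u -> 1 < v -> 1 < p -> 1 < q -> 1 < r ->
  1/u + 1/v = 1 ->
  1/(u*(p-1)) + 1/(v*(q-1)) = 1/(r-1) ->
  (forall s t : R, 0 < s -> 0 < t ->
     lhs10 u v p q r s t <= rhs10 u v p q r /\
     (lhs10 u v p q r s t = rhs10 u v p q r <-> s = 1/(p*v) /\ t = 1/(q*u))) /\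
  is_lub (fun y => exists s t, 0 < s /\ 0 < t /\ y = lhs10 u v p q r s t)
         (rhs10 u v p q r).
Proof.
  intros hu hv hp hq hr huv hpqr.
  pose proof (lhs10_le_rhs10 u v p q r hu hv hp hq hr huv hpqr) as hmax.
  split; [exact hmax | split].
  - intros y (s & t & hs & ht & ->).
    apply (hmax s t hs ht).
  - intros b hb.
    assert (hs0 : 0 < 1 / (p * v)) by (apply Rdiv_lt_0_compat; nra).
    assert (ht0 : 0 < 1 / (q * u)) by (apply Rdiv_lt_0_compat; nra).
    apply hb; exists (1 / (p * v)), (1 / (q * u)); split; [exact hs0 | split; [exact ht0 |]].
    symmetry; apply (hmax _ _ hs0 ht0); split; reflexivity.
Qed.
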